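(* Consider the augmented LSTM model and the observer described in the context, driven by inputs $u_k\in\mathcal{U}$ and by the measured output $y_k=W_yh_k+b_y+d_k$ of the augmented model. If $h_k\in\mathcal{H}$ and $d_k\in\mathcal{D}$ for all $k\ge0$, then the set $\hat{\mathcal{I}}=\hat{\mathcal{C}}\times\mathcal{H}\times\mathcal{D}$, with $\hat{\mathcal{C}}=\{\hat c\in\mathbb{R}^n:\|\hat c\|_\infty\le \hat{\bar\sigma}^i\bar\sigma^c/(1-\hat{\bar\sigma}^f)\}$, is positively invariant for the observer state $\hat\chi=[\hat c^\top\ \hat h^\top\ \hat d^\top]^\top$.
   Context: Augmented LSTM model ($c,h\in\mathbb{R}^n$, $u\in\mathbb{R}^m$, $d,w,y\in\mathbb{R}^p$): $c_{k+1}=\sigma(W_fu_k+U_fh_k+b_f)\circ c_k+\sigma(W_iu_k+U_ih_k+b_i)\circ\tanh(W_cu_k+U_ch_k+b_c)$, $h_{k+1}=\sigma(W_ou_k+U_oh_k+b_o)\circ\tanh(c_{k+1})$, $d_{k+1}=d_k+w_k$, $y_k=W_yh_k+b_y+d_k$; $\sigma$ the logistic sigmoid, activations elementwise, $\circ$ elementwise product. $\mathcal{U}=\{u:\|u\|_\infty\le u_{max}\}$, $\mathcal{H}=\{h:\|h\|_\infty\le1\}$, $\mathcal{D}=\{d:\|d\|_\infty\le d_{max}\}$. Observer with gains $L_f,L_i,L_o\in\mathbb{R}^{n\times p}$, $L_d\in\mathbb{R}^{p\times p}$: $\hat c_{k+1}=\sigma(W_fu_k+U_f\hat h_k+b_f+L_f(y_k-\hat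 y_k))\circ\hat c_k+\sigma(W_iu_k+U_i\hat h_k+b_i+L_i(y_k-\hat y_k))\circ\tanh(W_cu_k+U_c\hat h_k+b_c)$, $\hat h_{k+1}=\sigma(W_ou_k+U_o\hat h_k+b_o+L_o(y_k-\hat y_k))\circ\tanh(\hat c_{k+1})$, $\hat d_{k+1}=\mathrm{sat}(\hat d_k+L_d(y_k-\hat y_k),d_{max})$, $\hat y_k=W_y\hat h_k+b_y+\hat d_k$, where $\mathrm{sat}(v,v_{max})$ saturates each component to $[-v_{max},v_{max}]$. With $\|\cdot\|_\infty$ the induced $\infty$-norm of horizontally concatenated blocks: $\bar\sigma^c=\tanh(\|[W_cu_{max}\ U_c\ b_c]\|_\infty)$, $\hat{\bar\sigma}^f=\sigma(\|[W_fu_{max},\ U_f-L_fW_y,\ b_f,\ L_fW_y,\ 2L_fd_{max}]\|_\infty)$, $\hat{\bar\sigma}^i=\sigma(\|[W_iu_{max},\ U_i-L_iW_y,\ b_i,\ L_iW_y,\ 2L_id_{max}]\|_\infty)$. *)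

From HB Require Import structures.
From mathcomp Require Import all_boot all_order all_algebra.
From mathcomp Require Import all_classical all_reals all_analysis.
Set Implicit Arguments. Unset Strict Implicit. Unset Printing Implicit Defensive.
Import Order.TTheory GRing.Theory Num.Theory.
Local Open Scope ring_scope.

Section Defs.
Variable R : realType.

Definition sigmoid (x : R) : R := (1 + expR (- x))^-1.
Definition tanhR (x : R) : R := (expR x - expR (- x)) / (expR x + expR (- x)).

Definition sigv {a b} (A : 'M[R]_(a, b)) : 'M[R]_(a, b) := map_mx sigmoid A.
Definition tanhv {a b} (A : 'M[R]_(a, b)) : 'M[R]_(a, b) := map_mx tanhR A.
Definition hprod {a b} (A B : 'M[R]_(a, b)) : 'M[R]_(a, b) :=
  \matrix_(i, j) (A i j * B i j).

Definition sat {a b} (A : 'M[R]_(a, b)) (vmax : R) : 'M[R]_(a, b) :=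
  map_mx (fun x => Num.max (- vmax) (Num.min x vmax)) A.

(* induced infinity norm (max absolute row sum); for a column vector this is
   the vector infinity norm *)
Definition ninf {a b} (A : 'M[R]_(a, b)) : R :=
  \big[Num.max/0]_(i < a) \sum_(j < b) `|A i j|.

Definition sigma_c_bar {n m} (Wc : 'M[R]_(n, m)) (Uc : 'M[R]_n) (bc : 'cV[R]_n)
    (umax : R) : R :=
  tanhR (ninf (row_mx (row_mx (umax *: Wc) Uc) bc)).

Definition sigma_hat_bar {n m p} (Wg : 'M[R]_(n, m)) (Ug : 'M[R]_n)
    (bg : 'cV[R]_n) (Lg : 'M[R]_(n, p)) (Wy : 'M[R]_(p, n)) (umax dmax : R) : R :=
  sigmoid (ninf (row_mx (row_mx (row_mx (row_mx (umax *: Wg) (Ug - Lg *m Wy)) bg)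
                               (Lg *m Wy)) ((2 * dmax) *: Lg))).

End Defs.

(* Substituting y = Wy h + by + d, a gate pre-activation of the observer becomes
   Wg u + (Ug - Lg Wy) hh + bg + Lg Wy h + Lg (d - dh); for u in U, h and hh in H and
   d, dh in D its entries are bounded by the row sums of the block matrix defining
   sigma-hat, so the gates are at most sigma-hat^f, sigma-hat^i and the candidate
   tanh is at most sigma-bar^c in absolute value.  Each cell entry then obeys
   |ch'| <= sf |ch| + si sc, whose fixed point is B = si sc / (1 - sf), so |ch| <= B
   is preserved.  The hidden state is a sigmoid times a tanh, hence in [-1, 1], and
   saturation keeps dh in D. *)
From HB Require Import structures.
From mathcomp Require Import all_boot all_order all_algebra.
From mathcomp Require Import all_classical all_reals all_analysis.
From mathcomp Require Import ring lra.
Import Order.TTheory GRing.Theory Num.Theory.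
Local Open Scope ring_scope.
Set Implicit Arguments.
Unset Strict Implicit.

Section Activations.
Variable R : realType.
Implicit Types x y : R.

Lemma sigmoid_gt0 x : 0 < sigmoid x.
Proof. by rewrite /sigmoid invr_gt0 addr_gt0 ?ltr01 ?expR_gt0. Qed.

Lemma sigmoid_lt1 x : sigmoid x < 1.
Proof. by rewrite /sigmoid invf_lt1 ?addr_gt0 ?ltr01 ?expR_gt0 // ltrDl expR_gt0. Qed.

Lemma sigmoid_le x y : x <= y -> sigmoid x <= sigmoid y.
Proof.
move=> le_xy; rewrite /sigmoid lef_pV2 ?posrE ?addr_gt0 ?ltr01 ?expR_gt0 //.
by rewrite lerD2l ler_expR lerN2.
Qed.

Lemma tanhR_sigmoid x : tanhR x = 2 * sigmoid (2 * x) - 1.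
Proof.
rewrite /tanhR /sigmoid [2 * x]mulr_natl mulr2n opprD expRD !expRN.
have ex_gt0 := expR_gt0 x.
by field; rewrite !gt_eqF ?addr_gt0 ?mulr_gt0.
Qed.

Lemma tanhRN x : tanhR (- x) = - tanhR x.
Proof. by rewrite /tanhR opprK -mulNr opprB [expR x + _]addrC. Qed.

Lemma tanhR_le x y : x <= y -> tanhR x <= tanhR y.
Proof.
by move=> le_xy; rewrite !tanhR_sigmoid lerD2r ler_pM2l // sigmoid_le // ler_pM2l.
Qed.

Lemma tanhR_ge0 x : 0 <= x -> 0 <= tanhR x.
Proof.
by move=> /tanhR_le; rewrite /tanhR oppr0 subrr mul0r.
Qed.

Lemma normr_tanhR x : `|tanhR x| = tanhR `|x|.
Proof.
case: (ger0P x) => [x_ge0 | x_lt0]; first by rewrite ger0_norm ?tanhR_ge0.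
by rewrite tanhRN ler0_norm // -oppr_ge0 -tanhRN tanhR_ge0 // oppr_ge0 ltW.
Qed.

Lemma normr_tanhR_le1 x : `|tanhR x| <= 1.
Proof.
rewrite tanhR_sigmoid ler_norml.
by have := sigmoid_gt0 (2 * x); have := sigmoid_lt1 (2 * x); lra.
Qed.

Lemma hprodE a b (A B : 'M[R]_(a, b)) i j : hprod A B i j = A i j * B i j.
Proof. exact: mxE. Qed.

Lemma sigvE a b (A : 'M[R]_(a, b)) i j : sigv A i j = sigmoid (A i j).
Proof. exact: mxE. Qed.

Lemma tanhvE a b (A : 'M[R]_(a, b)) i j : tanhv A i j = tanhR (A i j).
Proof. exact: mxE. Qed.

End Activations.

Section InducedInfNorm.
Variable R : realType.

Definition rowsum {a b} (A : 'M[R]_(a, b)) (i : 'I_a) : R := \sum_(j < b) `|A i j|.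

Lemma rowsum_le_ninf a b (A : 'M[R]_(a, b)) i : rowsum A i <= ninf A.
Proof. by rewrite /ninf (bigD1 i) //= le_max lexx. Qed.

Lemma ninf_ge0 a b (A : 'M[R]_(a, b)) : 0 <= ninf A.
Proof.
rewrite /ninf; elim/big_ind: _ => // [x y x_ge0 _ | i _]; first by rewrite le_max x_ge0.
exact: sumr_ge0.
Qed.

Lemma ninf_le a b (A : 'M[R]_(a, b)) r :
  0 <= r -> (forall i, rowsum A i <= r) -> ninf A <= r.
Proof.
move=> r_ge0 le_rowsum; rewrite /ninf; elim/big_ind: _ => // [x y x_le y_le | i _].
  by rewrite ge_max x_le y_le.
exact: le_rowsum.
Qed.

Lemma rowsum_col a (v : 'cV[R]_a) i : rowsum v i = `|v i ord0|.
Proof. by rewrite /rowsum big_ord1. Qed.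

Lemma normr_le_ninf a (v : 'cV[R]_a) i : `|v i ord0| <= ninf v.
Proof. by rewrite -rowsum_col rowsum_le_ninf. Qed.

Lemma ninf_col_le a (v : 'cV[R]_a) r :
  0 <= r -> (forall i, `|v i ord0| <= r) -> ninf v <= r.
Proof. by move=> r_ge0 le_v; apply: ninf_le => // i; rewrite rowsum_col. Qed.

Lemma rowsum_row_mx a b c (A : 'M[R]_(a, b)) (B : 'M[R]_(a, c)) i :
  rowsum (row_mx A B) i = rowsum A i + rowsum B i.
Proof.
by rewrite /rowsum big_split_ord; congr (_ + _); apply: eq_bigr => j _;
  rewrite ?row_mxEl ?row_mxEr.
Qed.

Lemma rowsumZ a b (s : R) (A : 'M[R]_(a, b)) i :
  rowsum (s *: A) i = `|s| * rowsum A i.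
Proof. by rewrite /rowsum mulr_sumr; apply: eq_bigr => j _; rewrite mxE normrM. Qed.

Lemma ninfB a (v w : 'cV[R]_a) : ninf (v - w) <= ninf v + ninf w.
Proof.
apply: ninf_col_le => [|i]; first by rewrite addr_ge0 ?ninf_ge0.
by rewrite !mxE (le_trans (ler_normB _ _)) // lerD ?normr_le_ninf.
Qed.

Lemma normr_mulmx_le a b (A : 'M[R]_(a, b)) (v : 'cV[R]_b) r i :
  ninf v <= r -> `|(A *m v) i ord0| <= r * rowsum A i.
Proof.
move=> v_le; rewrite mxE /rowsum mulr_sumr (le_trans (ler_norm_sum _ _ _)) //.
apply: ler_sum => j _; rewrite normrM mulrC ler_wpM2r //.
exact: le_trans (normr_le_ninf v j) v_le.
Qed.

End InducedInfNorm.

Lemma ler_normD_le (R : numDomainType) (x y a b : R) :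
  `|x| <= a -> `|y| <= b -> `|x + y| <= a + b.
Proof. by move=> x_le y_le; rewrite (le_trans (ler_normD _ _)) // lerD. Qed.

Lemma ninf_hprod_sigv_tanhv_le1 (R : realType) a (x y : 'cV[R]_a) :
  ninf (hprod (sigv x) (tanhv y)) <= 1.
Proof.
apply: ninf_col_le => // i; rewrite !mxE normrM gtr0_norm ?sigmoid_gt0 //.
by rewrite mulr_ile1 ?normr_tanhR_le1 // ltW ?sigmoid_gt0 ?sigmoid_lt1.
Qed.

Lemma ninf_sat (R : realType) a (v : 'cV[R]_a) r : 0 <= r -> ninf (sat v r) <= r.
Proof.
move=> r_ge0; apply: ninf_col_le => // i; rewrite mxE ler_norml le_max lexx /=.
by rewrite ge_max ge_min lexx orbT andbT; lra.
Qed.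

Lemma cell_update_le (R : realFieldType) (f g t c sf sg sc : R) :
  0 <= f <= sf -> sf < 1 -> 0 <= g <= sg -> `|t| <= sc ->
  `|c| <= sg * sc / (1 - sf) -> `|f * c + g * t| <= sg * sc / (1 - sf).
Proof.
move=> /andP[f_ge0 f_le] sf_lt1 /andP[g_ge0 g_le] t_le c_le.
have fixed : sf * (sg * sc / (1 - sf)) + sg * sc = sg * sc / (1 - sf).
  by field; rewrite subr_eq0 gt_eqF.
rewrite -[leRHS]fixed; apply: ler_normD_le; rewrite normrM ger0_norm //.
  exact: ler_pM.
exact: ler_pM.
Qed.

Section ObserverBounds.
Variables (R : realType) (n m p : nat) (Wy : 'M[R]_(p, n)) (by_ : 'cV[R]_p).
Variables (umax dmax : R) (u : 'cV[R]_m) (h hh : 'cV[R]_n) (d dh : 'cV[R]_p).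
Hypotheses (u_le : ninf u <= umax) (h_le : ninf h <= 1) (hh_le : ninf hh <= 1).
Hypotheses (d_le : ninf d <= dmax) (dh_le : ninf dh <= dmax).

Local Notation innovation := ((Wy *m h + by_ + d) - (Wy *m hh + by_ + dh)).

Lemma observer_gate_le (Wg : 'M[R]_(n, m)) (Ug : 'M[R]_n) (bg : 'cV[R]_n)
    (Lg : 'M[R]_(n, p)) i :
  sigmoid ((Wg *m u + Ug *m hh + bg + Lg *m innovation) i ord0)
  <= sigma_hat_bar Wg Ug bg Lg Wy umax dmax.
Proof.
have umax_ge0 : 0 <= umax := le_trans (ninf_ge0 u) u_le.
have dmax_ge0 : 0 <= dmax := le_trans (ninf_ge0 d) d_le.
have -> : Wg *m u + Ug *m hh + bg + Lg *m innovation
    = Wg *m u + (Ug - Lg *m Wy) *m hh + bg + (Lg *m Wy) *m h + Lg *m (d - dh).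
  rewrite mulmxBl -!mulmxA !mulmxBr !mulmxDr.
  by apply/matrixP => a b; rewrite !mxE; ring.
apply: sigmoid_le; rewrite (le_trans (ler_norm _)) // (le_trans _ (rowsum_le_ninf _ i)) //.
have two_dmax_ge0 : 0 <= 2 * dmax by rewrite mulr_ge0.
rewrite !rowsum_row_mx !rowsumZ rowsum_col (ger0_norm umax_ge0) (ger0_norm two_dmax_ge0).
rewrite 4!mxE; apply: ler_normD_le; first apply: ler_normD_le;
  first apply: ler_normD_le; first apply: ler_normD_le.
- exact: normr_mulmx_le.
- by rewrite -[leRHS]mul1r normr_mulmx_le.
- by [].
- by rewrite -[leRHS]mul1r normr_mulmx_le.
- by rewrite normr_mulmx_le // (le_trans (ninfB _ _)) // mulr_natl mulr2n lerD.
Qed.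

Lemma observer_candidate_le (Wc : 'M[R]_(n, m)) (Uc : 'M[R]_n) (bc : 'cV[R]_n) i :
  `|tanhR ((Wc *m u + Uc *m hh + bc) i ord0)| <= sigma_c_bar Wc Uc bc umax.
Proof.
have umax_ge0 : 0 <= umax := le_trans (ninf_ge0 u) u_le.
rewrite normr_tanhR; apply: tanhR_le; rewrite (le_trans _ (rowsum_le_ninf _ i)) //.
rewrite !rowsum_row_mx rowsumZ rowsum_col (ger0_norm umax_ge0).
rewrite 2!mxE; apply: ler_normD_le; first apply: ler_normD_le.
- exact: normr_mulmx_le.
- by rewrite -[leRHS]mul1r normr_mulmx_le.
- by [].
Qed.

Lemma observer_cell_le (Wf Wi Wc : 'M[R]_(n, m)) (Uf Ui Uc : 'M[R]_n)
    (bf bi bc : 'cV[R]_n) (Lf Li : 'M[R]_(n, p)) (ch : 'cV[R]_n) :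
  let B := sigma_hat_bar Wi Ui bi Li Wy umax dmax * sigma_c_bar Wc Uc bc umax
           / (1 - sigma_hat_bar Wf Uf bf Lf Wy umax dmax) in
  ninf ch <= B ->
  ninf (hprod (sigv (Wf *m u + Uf *m hh + bf + Lf *m innovation)) ch
        + hprod (sigv (Wi *m u + Ui *m hh + bi + Li *m innovation))
                (tanhv (Wc *m u + Uc *m hh + bc))) <= B.
Proof.
move=> B ch_le; apply: ninf_col_le => [|j]; first exact: le_trans (ninf_ge0 ch) ch_le.
rewrite mxE !hprodE !sigvE tanhvE; apply: cell_update_le.
- by rewrite ltW ?sigmoid_gt0 ?observer_gate_le.
- exact: sigmoid_lt1.
- by rewrite ltW ?sigmoid_gt0 ?observer_gate_le.
- exact: observer_candidate_le.
- exact: le_trans (normr_le_ninf ch j) ch_le.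
Qed.

End ObserverBounds.

Theorem lemma3 (R : realType) (n m p : nat)
  (Wf Wi Wo Wc : 'M[R]_(n, m)) (Uf Ui Uo Uc : 'M[R]_n)
  (bf bi bo bc : 'cV[R]_n) (Wy : 'M[R]_(p, n)) (by_ : 'cV[R]_p)
  (Lf Li Lo : 'M[R]_(n, p)) (Ld : 'M[R]_p) (umax dmax : R)
  (u : nat -> 'cV[R]_m) (c h : nat -> 'cV[R]_n) (d w y : nat -> 'cV[R]_p)
  (ch hh : nat -> 'cV[R]_n) (dh : nat -> 'cV[R]_p)
  (* augmented LSTM model *)
  (Hc : forall k, c k.+1 = hprod (sigv (Wf *m u k + Uf *m h k + bf)) (c k)
                         + hprod (sigv (Wi *m u k + Ui *m h k + bi))
                                 (tanhv (Wc *m u k + Uc *m h k + bc)))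
  (Hh : forall k, h k.+1 = hprod (sigv (Wo *m u k + Uo *m h k + bo)) (tanhv (c k.+1)))
  (Hd : forall k, d k.+1 = d k + w k)
  (Hy : forall k, y k = Wy *m h k + by_ + d k)
  (* observer *)
  (Hch : forall k, ch k.+1 =
      hprod (sigv (Wf *m u k + Uf *m hh k + bf
                   + Lf *m (y k - (Wy *m hh k + by_ + dh k)))) (ch k)
    + hprod (sigv (Wi *m u k + Ui *m hh k + bi
                   + Li *m (y k - (Wy *m hh k + by_ + dh k))))
            (tanhv (Wc *m u k + Uc *m hh k + bc)))
  (Hhh : forall k, hh k.+1 =
      hprod (sigv (Wo *m u k + Uo *m hh k + bo
                   + Lo *m (y k - (Wy *m hh k + by_ + dh k)))) (tanhv (ch k.+1)))
  (Hdh : forall k, dh k.+1 = sat (dh k + Ld *m (y k - (Wy *m hh k + by_ + dh k))) dmax)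
  (* inputs in U, true hidden state in H, disturbance in D, for all k *)
  (HU : forall k, ninf (u k) <= umax)
  (HH : forall k, ninf (h k) <= 1)
  (HD : forall k, ninf (d k) <= dmax) :
  let chat_bound := sigma_hat_bar Wi Ui bi Li Wy umax dmax * sigma_c_bar Wc Uc bc umax
                    / (1 - sigma_hat_bar Wf Uf bf Lf Wy umax dmax) in
  (* positive invariance of I_hat = C_hat x H x D for the observer state *)
  ninf (ch 0) <= chat_bound -> ninf (hh 0) <= 1 -> ninf (dh 0) <= dmax ->
  forall k, ninf (ch k) <= chat_bound /\ ninf (hh k) <= 1 /\ ninf (dh k) <= dmax.
Proof.
move=> B ch0_le hh0_le dh0_le; have dmax_ge0 := le_trans (ninf_ge0 _) (HD 0%N).
elim=> [|k [ch_le [hh_le dh_le]]]; first by [].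
rewrite Hhh Hch Hdh Hy; split; [|split].
- exact: observer_cell_le.
- exact: ninf_hprod_sigv_tanhv_le1.
- exact: ninf_sat.
Qed.
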